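(* For all constraint sets $C,\tilde C$ and substitutions $\sigma$: if $C\to^{*\,\sigma}\tilde C$ and $\tilde C$ is in normal form, then there exists a unique substitution $\sigma_c$ with $\sigma_c\vdash_{\min} C$.
   Context: There are two binding times $\mathsf{S}$, $\mathsf{D}$; $\mathcal{L}$ is a finite set of labels disjoint from them. A binding-time expression is a binding time or a label; a constraint is a formal pair $B_1\preceq B_2$; a constraint set is a finite set of constraints, with $\mathrm{labels}(C)=\{l\in\mathcal{L}:\exists B.\ l\preceq B\in C\text{ or }B\preceq l\in C\}$. $C$ is in normal form if every $c\in C$ has one of the forms $\mathsf{S}\preceq l$, $l\preceq\mathsf{D}$, $l\preceq\tilde l$ with $l,\tilde l\in\mathcal{L}$. Satisfaction $\vdash b_1\preceq b_2$ holds exactly for $\mathsf{S}\preceq\mathsf{D}$, $\mathsf{S}\preceq\mathsf{S}$, $\mathsf{D}\preceq\mathsf{D}$. A substitution is a finite partial map $\sigma:\mathcal{L}\rightharpoonup\{\mathsf{S},\mathsf{D}\}$, extended to binding-time expressions as the identity on binding times and on labels outside its domain; $\sigma(C)=\{\sigma(B_1)\preceq\sigma(B_2): B_1\preceq B_2\in C\}$. The extension $\sigma\oplus\hat\sigma$ has domain $\mathrm{dom}(\sigma)\cup\mathrm{dom}(\hat\sigma)$ and maps $l$ to $\sigma(l)$ if $l\in\mathrm{dom}(\sigma)$, else to $\hat\sigma(l)$. $\sigma\vdash C$ means: for every $B_1\preceq B_2\in C$, $\sigma(B_1),\sigma(B_2)$ are binding times and $\vdash\sigma(B_1)\preceq\sigma(B_2)$.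 $\sigma_c\vdash_{\min}C$ means: $\sigma_c\vdash C$, $\mathrm{dom}(\sigma_c)=\mathrm{labels}(C)$, and for every $\sigma\vdash C$ and $l\in\mathrm{labels}(C)$, $\vdash\sigma_c(l)\preceq\sigma(l)$. Write $[\,]$ for the empty substitution and $[l\mapsto b]$ for the substitution with domain $\{l\}$. The normalization relation $C\to^{\sigma}\tilde C$ holds if $C=C_0\uplus\{c\}$ and one of: (a) $c=\mathsf{S}\preceq\mathsf{S}$, $\sigma=[\,]$, $\tilde C=C_0$; (b) $c=\mathsf{S}\preceq\mathsf{D}$, $\sigma=[\,]$, $\tilde C=C_0$; (c) $c=\mathsf{D}\preceq\mathsf{D}$, $\sigma=[\,]$, $\tilde C=C_0$; (d) $c=l\preceq\mathsf{S}$ with $l\in\mathcal{L}$, $\sigma=[l\mapsto\mathsf{S}]$, $\tilde C=[l\mapsto\mathsf{S}](C_0)$; (e) $c=\mathsf{D}\preceq l$ with $l\in\mathcal{L}$, $\sigma=[l\mapsto\mathsf{D}]$, $\tilde C=[l\mapsto\mathsf{D}](C_0)$. Exhaustive application $C\to^{*\,\sigma}\tilde C$ means there exist $k\ge 0$ and $C=\tilde C_0\to^{\sigma_1}\tilde C_1\to^{\sigma_2}\cdots\to^{\sigma_k}\tilde C_k=\tilde C$ with $\sigma=\sigma_1\oplus\cdots\oplus\sigma_k$, and no normalization step applies to $\tilde C$. *)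

From HB Require Import structures.
From mathcomp Require Import all_boot.
Set Implicit Arguments. Unset Strict Implicit. Unset Printing Implicit Defensive.

Inductive bt := BS | BD.

Definition bt2b (b : bt) : bool := if b is BS then true else false.
Definition b2bt (x : bool) : bt := if x then BS else BD.
Lemma bt2bK : cancel bt2b b2bt. Proof. by case. Qed.
HB.instance Definition _ := Finite.copy bt (can_type bt2bK).

Section Defs.
Variable L : finType.

(* binding-time expressions: a binding time (inl) or a label (inr);
   the sum type makes labels disjoint from binding times *)
Definition bte := (bt + L)%type.
(* a constraint B1 <= B2 is the formal pair (B1, B2) *)
Definition constraint := (bte * bte)%type.
Definition cset := {set constraint}.

Definition labels (C : cset) : {set L} :=
  [set l | [exists c in C, (c.1 == inr l) || (c.2 == inr l)]].

Definition normal_form (C : cset) : Prop :=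
  forall c, c \in C ->
    (exists l, c = (inl BS, inr l)) \/ (exists l, c = (inr l, inl BD)) \/
    (exists l l', c = (inr l, inr l')).

Definition bt_le (b1 b2 : bt) : bool :=
  match b1, b2 with
  | BS, BD | BS, BS | BD, BD => true
  | _, _ => false
  end.

Definition bte_le (B1 B2 : bte) : Prop :=
  match B1, B2 with
  | inl b1, inl b2 => bt_le b1 b2
  | _, _ => False
  end.

Definition subst := {ffun L -> option bt}.
Definition dom (s : subst) : {set L} := [set l | s l != None].
Definition empty_subst : subst := [ffun _ => None].
Definition single (l : L) (b : bt) : subst :=
  [ffun l' => if l' == l then Some b else None].
Definition ext (s s' : subst) : subst :=
  [ffun l => if s l is Some b then Some b else s' l].

Definition app (s : subst) (B : bte) : bte :=
  match B with
  | inl b => inl b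
  | inr l => if s l is Some b then inl b else inr l
  end.
Definition app_c (s : subst) (c : constraint) : constraint :=
  (app s c.1, app s c.2).
Definition app_set (s : subst) (C : cset) : cset := [set app_c s c | c in C].

Definition sat (s : subst) (C : cset) : Prop :=
  forall c, c \in C -> bte_le (app s c.1) (app s c.2).

Definition min_sol (sc : subst) (C : cset) : Prop :=
  [/\ sat sc C, dom sc = labels C &
      forall s, sat s C -> forall l, l \in labels C ->
        bte_le (app sc (inr l)) (app s (inr l))].

(* one normalization step C ->^sigma C'; C = C0 ⊎ {c} means c \in C, C0 = C :\ c *)
Inductive step : cset -> subst -> cset -> Prop :=
| step_SS (C : cset) : (inl BS, inl BS) \in C ->
    step C empty_subst (C :\ (inl BS, inl BS))
| step_SD (C : cset) : (inl BS, inl BD) \in C ->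
    step C empty_subst (C :\ (inl BS, inl BD))
| step_DD (C : cset) : (inl BD, inl BD) \in C ->
    step C empty_subst (C :\ (inl BD, inl BD))
| step_lS (C : cset) (l : L) : (inr l, inl BS) \in C ->
    step C (single l BS) (app_set (single l BS) (C :\ (inr l, inl BS)))
| step_Dl (C : cset) (l : L) : (inl BD, inr l) \in C ->
    step C (single l BD) (app_set (single l BD) (C :\ (inl BD, inr l))).

(* finite chains of steps, composing substitutions with ext:
   sigma = sigma_1 (+) ... (+) sigma_k *)
Inductive steps : cset -> subst -> cset -> Prop :=
| steps_refl (C : cset) : steps C empty_subst C
| steps_cons (C : cset) (s1 : subst) (C1 : cset) (s2 : subst) (C2 : cset) : step C s1 C1 -> steps C1 s2 C2 ->
    steps C (ext s1 s2) C2.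

Definition irreducible (C : cset) : Prop := ~ exists s C', step C s C'.

Definition exhaustive (C : cset) (s : subst) (C' : cset) : Prop :=
  steps C s C' /\ irreducible C'.

End Defs.

From mathcomp Require Import all_boot.

Set Implicit Arguments.
Unset Strict Implicit.
Unset Printing Implicit Defensive.

(* Normalization steps are sound backwards: a solution of the result, extended
   by the substitution of the step, solves the original set.  A normal form is
   solved by mapping every label to S, so C has a solution.  Solutions are
   closed under pointwise meet (S below D), hence the meet of all solutions,
   restricted to labels(C), is the least solution; it is unique by
   antisymmetry of the order on binding times. *)

Definition bt_min (a b : bt) : bt := if a is BS then BS else b.

Lemma bt_le_trans (a b c : bt) : bt_le a b -> bt_le b c -> bt_le a c.
Proof. by case: a; case: b; case: c. Qed.

Lemma bt_le_anti (a b : bt) : bt_le a b -> bt_le b a -> a = b.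
Proof. by case: a; case: b. Qed.

Lemma bt_le_minl (a b : bt) : bt_le (bt_min a b) a.
Proof. by case: a; case: b. Qed.

Lemma bt_le_minr (a b : bt) : bt_le (bt_min a b) b.
Proof. by case: a; case: b. Qed.

Lemma bt_le_min (a b a' b' : bt) :
  bt_le a b -> bt_le a' b' -> bt_le (bt_min a a') (bt_min b b').
Proof. by case: a; case: b; case: a'; case: b'. Qed.

Section Solutions.
Variable L : finType.
Implicit Types (s t : subst L) (C : cset L) (B : bte L) (l : L) (r : seq (subst L)).

Definition bte_leb B1 B2 : bool :=
  if (B1, B2) is (inl b1, inl b2) then bt_le b1 b2 else false.

Lemma bte_leP B1 B2 : reflect (bte_le B1 B2) (bte_leb B1 B2).
Proof. by case: B1 => [b1|l1]; case: B2 => [b2|l2] /=; try apply: idP; constructor. Qed.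

Definition satb s C : bool := [forall c in C, bte_leb (app s c.1) (app s c.2)].

Lemma satP s C : reflect (sat s C) (satb s C).
Proof. by apply: (iffP forall_inP) => H c /H /bte_leP. Qed.

Lemma sat_setD1 t C c :
  sat t (C :\ c) -> bte_le (app t c.1) (app t c.2) -> sat t C.
Proof.
move=> H Hc c' c'C; case: (eqVneq c' c) => [->//|ne].
by apply: H; rewrite in_setD1 ne.
Qed.

Lemma sat_dom s C l : sat s C -> l \in labels C -> s l != None.
Proof.
move=> H; rewrite inE => /existsP [c /andP [/H + /orP [] /eqP E]]; rewrite E /=.
  by case: (s l).
by case: (app s c.1) => //; case: (s l).
Qed.

Lemma ext0s t : ext (empty_subst L) t = t.
Proof. by apply/ffunP => l; rewrite !ffunE. Qed.

Lemma extA s1 s2 t : ext s1 (ext s2 t) = ext (ext s1 s2) t.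
Proof. by apply/ffunP => l; rewrite !ffunE; case: (s1 l). Qed.

Lemma app_ext s t B : app (ext s t) B = app t (app s B).
Proof. by case: B => [b|l] //=; rewrite ffunE; case: (s l). Qed.

Lemma sat_app_set s t C : sat t (app_set s C) -> sat (ext s t) C.
Proof. by move=> H c cC; rewrite !app_ext; apply: H (imset_f (app_c s) cC). Qed.

Lemma step_sat C s C' t : step C s C' -> sat t C' -> sat (ext s t) C.
Proof.
case=> {C s C'} C.
- by move=> _; rewrite ext0s => /sat_setD1; apply.
- by move=> _; rewrite ext0s => /sat_setD1; apply.
- by move=> _; rewrite ext0s => /sat_setD1; apply.
- move=> l _ /sat_app_set /sat_setD1; apply.
  by rewrite /= !ffunE eqxx.
- move=> l _ /sat_app_set /sat_setD1; apply.
  by rewrite /= !ffunE eqxx.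
Qed.

Lemma steps_sat C s C' t : steps C s C' -> sat t C' -> sat (ext s t) C.
Proof.
move=> st; elim: st t => {C s C'} [C|C s1 C1 s2 C2 st _ IH] t.
  by rewrite ext0s.
by rewrite -extA => /IH /(step_sat st).
Qed.

Lemma sat_normal_form C : normal_form C -> sat [ffun _ => Some BS] C.
Proof.
move=> H c /H [[l ->]|[[l ->]|[l [l' ->]]]]; by rewrite /= !ffunE.
Qed.

Definition meet s t : subst L :=
  [ffun l => if (s l, t l) is (Some a, Some b) then Some (bt_min a b) else None].

Lemma meet_SomeE s t l a :
  meet s t l = Some a -> exists a1 a2, [/\ s l = Some a1, t l = Some a2 & a = bt_min a1 a2].
Proof. by rewrite ffunE; case: (s l) => [a1|//]; case: (t l) => [a2|//] [<-]; exists a1, a2. Qed.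

Lemma app_meet s t B a b :
  app s B = inl a -> app t B = inl b -> app (meet s t) B = inl (bt_min a b).
Proof.
case: B => [x [<-] [<-]|l /=]; first by case: x.
by rewrite ffunE; case: (s l) => [a'|//] [->]; case: (t l) => [b'|//] [->].
Qed.

Lemma sat_meet s t C : sat s C -> sat t C -> sat (meet s t) C.
Proof.
move=> Hs Ht c cC; move: (Hs c cC) (Ht c cC).
case E1: (app s c.1) => [a1|//]; case E2: (app s c.2) => [a2|//] /= le_a.
case F1: (app t c.1) => [b1|//]; case F2: (app t c.2) => [b2|//] /= le_b.
by rewrite (app_meet E1 F1) (app_meet E2 F2) /=; apply: bt_le_min.
Qed.

Lemma sat_foldr_meet t0 r C :
  sat t0 C -> all (satb^~ C) r -> sat (foldr meet t0 r) C.
Proof.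
move=> H0; elim: r => [//|t r IH] /= /andP [/satP Ht /IH Hr].
exact: sat_meet.
Qed.

Lemma foldr_meet_None t0 r l : t0 l = None -> foldr meet t0 r l = None.
Proof.
move=> H0; elim: r => [//|t r IH] /=.
by rewrite ffunE IH; case: (t l).
Qed.

Lemma foldr_meet_le t0 r t l a b :
  t \in r -> foldr meet t0 r l = Some a -> t l = Some b -> bt_le a b.
Proof.
elim: r a => [//|x r IH] a /=; rewrite inE.
move=> /orP tr /meet_SomeE [a1 [a2 [E1 E2 ->]]] Et.
case: tr => [/eqP tx|tr].
  by move: E1; rewrite -tx Et => -[<-]; apply: bt_le_minl.
exact: bt_le_trans (bt_le_minr a1 a2) (IH _ tr E2 Et).
Qed.

Definition restrict (A : {set L}) s : subst L :=
  [ffun l => if l \in A then s l else None].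

Lemma app_restrict (A : {set L}) s B :
  (forall l, B = inr l -> l \in A) -> app (restrict A s) B = app s B.
Proof. by case: B => [//|l] /= /(_ l erefl) lA; rewrite ffunE lA. Qed.

Lemma mem_labels C c l :
  c \in C -> c.1 = inr l \/ c.2 = inr l -> l \in labels C.
Proof.
move=> cC El; rewrite inE; apply/existsP; exists c.
by rewrite cC; case: El => ->; rewrite eqxx ?orbT.
Qed.

Lemma sat_restrict s C : sat s C -> sat (restrict (labels C) s) C.
Proof.
move=> H c cC; rewrite !app_restrict; first exact: H.
- by move=> l El; apply: mem_labels cC _; right.
- by move=> l El; apply: mem_labels cC _; left.
Qed.

Definition least_sol C t0 : subst L :=
  foldr meet (restrict (labels C) t0) (enum [pred t | satb t C]).

Lemma least_solP C t0 : sat t0 C -> min_sol (least_sol C t0) C.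
Proof.
move=> H0; have sols : all (satb^~ C) (enum [pred t | satb t C]).
  by apply/allP => t; rewrite mem_enum.
have Hsat := sat_foldr_meet (sat_restrict H0) sols.
split=> //.
  apply/setP => l; rewrite inE; apply/idP/idP => [|/(sat_dom Hsat)//].
  by apply: contraR => lC; apply/eqP/foldr_meet_None; rewrite ffunE (negbTE lC).
move=> s Hs l lC /=.
case Ea: (least_sol C t0 l) (sat_dom Hsat lC) => [a|//] _.
case Eb: (s l) (sat_dom Hs lC) => [b|//] _.
by apply: foldr_meet_le Ea Eb; rewrite mem_enum inE; apply/satP.
Qed.

Lemma min_sol_unique s t C : min_sol s C -> min_sol t C -> s = t.
Proof.
move=> [Hs Ds Ms] [Ht Dt Mt]; apply/ffunP => l.
have [lC|lC] := boolP (l \in labels C); last first.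
  have: l \notin dom s by rewrite Ds.
  have: l \notin dom t by rewrite Dt.
  by rewrite !inE !negbK => /eqP -> /eqP ->.
move: (Ms t Ht l lC) (Mt s Hs l lC) => /=.
case: (s l) => [a|//]; case: (t l) => [b|//] ab ba.
by rewrite (bt_le_anti ab ba).
Qed.

End Solutions.

Theorem theorem2 (L : finType) (C Ct : cset L) (s : subst L) :
  exhaustive C s Ct -> normal_form Ct ->
  exists sc : subst L, min_sol sc C /\ (forall sc', min_sol sc' C -> sc' = sc).
Proof.
move=> [st _] /sat_normal_form /(steps_sat st) Hsat.
exists (least_sol C (ext s [ffun _ => Some BS])).
have Hmin := least_solP Hsat.
by split=> // sc' /min_sol_unique; apply.
Qed.
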